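(* Let $k\ge1$ and $\boldsymbol F\in\mathcal P_k$. Then the treewidth of the underlying graph of $\boldsymbol F$ is at most $3k-1$.
   Context: A $(k,k)$-bilabelled graph is $\boldsymbol F=(F,\boldsymbol u,\boldsymbol v)$ with $\boldsymbol u,\boldsymbol v\in V(F)^k$; $F$ is the underlying graph. Series composition $\boldsymbol F\cdot\boldsymbol F'$: disjoint union with $v_i$ identified with $u'_i$, multiple edges removed, labels $(\boldsymbol u,\boldsymbol v')$. Parallel composition $\boldsymbol F\odot\boldsymbol F'$: identify $u_i$ with $u'_i$ and $v_i$ with $v'_i$, multiple edges removed. For $\sigma\in\mathfrak S_{2k}$, $\boldsymbol F^\sigma$ has in-labels $(w_{\sigma(1)},\dots,w_{\sigma(k)})$ and out-labels $(w_{\sigma(k+1)},\dots,w_{\sigma(2k)})$, $\boldsymbol w=\boldsymbol u\boldsymbol v$. $\mathscr C_k$ = cyclic group of rotations of $(1,\dots,k,2k,\dots,k+1)$. Bilabelled minors: via edge contraction, edge deletion, deletion of unlabelled vertices. $\boldsymbol C_k$: vertices $[2k]$, in-labels $(1,\dots,k)$, out-labels $(k+1,\dots,2k)$, edges $\{i,i+1\}$ ($i\in[2k]\setminus\{k,2k\}$), $\{1,k+1\},\{k,2k\}$; $\boldsymbol M_k$: same vertices/labels, edges $\{i,i+k\}$. $\mathcal Q_k^P,\mathcal Q_k^S$ = bilabelled minors of $\boldsymbol C_k,\boldsymbol M_k$; $\mathcal Q_k$ their union. $\mathcal P_k$ = smallest class containing $\mathcal Q_k$, closed under series composition, $\boldsymbol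 F\mapsto\boldsymbol F\odot\boldsymbol Q$ ($\boldsymbol Q\in\mathcal Q_k^P$), and $\boldsymbol F\mapsto\boldsymbol F^\sigma$ ($\sigma\in\mathscr C_k$). *)

From mathcomp Require Import all_boot all_fingroup.
Set Implicit Arguments. Unset Strict Implicit. Unset Printing Implicit Defensive.

Definition symr (T : Type) (r : rel T) : rel T := fun a b => r a b || r b a.

Lemma symr_sym (T : Type) (r : rel T) : symmetric (symr r).
Proof. by move=> a b; rewrite /symr orbC. Qed.

(* a (finite) tree: nonempty, loopless, symmetric, connected, and every edge
   is a bridge (minimally connected) *)
Definition is_tree (T : finType) (e : rel T) : Prop :=
  [/\ 0 < #|T|, symmetric e, irreflexive e,
      (forall x y, connect e x y) &
      (forall x y, e x y ->
         ~~ connect (fun a b => e a b &&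
                       ~~ (((a == x) && (b == y)) || ((a == y) && (b == x)))) x y)].

Definition tree_decomposition (V : finType) (E : rel V)
    (T : finType) (e : rel T) (B : T -> {set V}) : Prop :=
  [/\ is_tree e,
      (forall x : V, exists t, x \in B t),
      (forall x y : V, E x y -> exists t, (x \in B t) && (y \in B t)) &
      (forall (x : V) t1 t2, x \in B t1 -> x \in B t2 ->
         connect (fun a b => [&& e a b, x \in B a & x \in B b]) t1 t2)].

Definition treewidth_le (V : finType) (E : rel V) (w : nat) : Prop :=
  exists (T : finType) (e : rel T) (B : T -> {set V}),
    tree_decomposition E e B /\ forall t, #|B t| <= w.+1.

(* in-labels [bu], out-labels [bv]; edges given by a symmetric relation
   (so multiple edges are automatically identified) *)
Record bgraph (k : nat) := BGraph {
  bV : finType;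
  bE : rel bV;
  bE_sym : symmetric bE;
  bu : 'I_k -> bV;
  bv : 'I_k -> bV }.
Arguments bV {k} b.
Arguments bE {k} b _ _.
Arguments bE_sym {k} b _ _.
Arguments bu {k} b _.
Arguments bv {k} b _.

Definition bg_iso k (G H : bgraph k) : Prop :=
  exists h : bV G -> bV H,
    [/\ bijective h, (forall a b, bE H (h a) (h b) = bE G a b),
        (forall i, h (bu G i) = bu H i) & (forall i, h (bv G i) = bv H i)].

Definition same_pair (T : eqType) (x y a b : T) : bool :=
  ((a == x) && (b == y)) || ((a == y) && (b == x)).

Definition del_edge k (G H : bgraph k) : Prop :=
  exists x y, bE G x y /\
  exists h : bV G -> bV H,
    [/\ bijective h,
        (forall a b, bE H (h a) (h b) = bE G a b && ~~ same_pair x y a b),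
        (forall i, h (bu G i) = bu H i) & (forall i, h (bv G i) = bv H i)].

Definition del_vertex k (G H : bgraph k) : Prop :=
  exists x : bV G,
    (forall i, bu G i != x /\ bv G i != x) /\
  exists h : bV H -> bV G,
    [/\ injective h,
        (forall y, y != x -> exists z, h z = y),
        (forall z, h z != x),
        (forall a b, bE H a b = bE G (h a) (h b)) &
        ((forall i, h (bu H i) = bu G i) /\ (forall i, h (bv H i) = bv G i))].

Definition contract_edge k (G H : bgraph k) : Prop :=
  exists x y, bE G x y /\ x != y /\
  exists h : bV G -> bV H,
    [/\ (forall p, exists a, h a = p),
        (forall a b, (h a == h b) = (a == b) || same_pair x y a b),
        (forall p q, bE H p q <->
           exists a b, [/\ h a = p, h b = q, bE G a b & ~~ same_pair x y a b]),
        (forall i, h (bu G i) = bu H i) & (forall i, h (bv G i) = bv H i)].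

Inductive bminor k (G : bgraph k) : bgraph k -> Prop :=
  | bminor_iso H : bg_iso G H -> bminor G H
  | bminor_del_edge H H' : bminor G H -> del_edge H H' -> bminor G H'
  | bminor_del_vertex H H' : bminor G H -> del_vertex H H' -> bminor G H'
  | bminor_contract H H' : bminor G H -> contract_edge H H' -> bminor G H'.

(* vertices 'I_(k+k); in-label i is i, out-label i is k+i *)
Definition C_adj k : rel 'I_(k + k) := fun a b =>
  [|| (a.+1 == b :> nat) && (a != k.-1 :> nat),
      (a == 0 :> nat) && (b == k :> nat)
    | (a == k.-1 :> nat) && (b == (k + k).-1 :> nat)].

Definition M_adj k : rel 'I_(k + k) := fun a b => (a + k == b :> nat).

Definition Ck (k : nat) : bgraph k :=
  @BGraph k _ (symr (@C_adj k)) (@symr_sym _ _) (lshift k) (@rshift k k).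

Definition Mk (k : nat) : bgraph k :=
  @BGraph k _ (symr (@M_adj k)) (@symr_sym _ _) (lshift k) (@rshift k k).

(* H (with vertex map h from T) is the graph (T,E) with vertices identified
   along the equivalence relation generated by [ident], multiple edges removed *)
Definition glue (T : finType) (E : rel T) (ident : rel T)
    (W : finType) (EW : rel W) (h : T -> W) : Prop :=
  [/\ (forall p, exists x, h x = p),
      (forall x y, (h x == h y) = connect (symr ident) x y) &
      (forall p q, EW p q <-> exists x y, [/\ h x = p, h y = q & E x y])].

Definition sumE {k} (F F' : bgraph k) : rel (bV F + bV F')%type :=
  fun s t => match s, t with
             | inl a, inl b => bE F a b
             | inr a, inr b => bE F' a b
             | _, _ => false
             end.
Arguments sumE {k} F F' _ _.

Definition series_comp k (F F' H : bgraph k) : Prop :=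
  exists h : (bV F + bV F')%type -> bV H,
    [/\ glue (sumE F F')
          (fun s t => match s, t with
                      | inl a, inr b => [exists i, (a == bv F i) && (b == bu F' i)]
                      | _, _ => false end)
          (bE H) h,
        (forall i, bu H i = h (inl (bu F i))) &
        (forall i, bv H i = h (inr (bv F' i)))].

Definition parallel_comp k (F F' H : bgraph k) : Prop :=
  exists h : (bV F + bV F')%type -> bV H,
    [/\ glue (sumE F F')
          (fun s t => match s, t with
                      | inl a, inr b =>
                          [exists i, ((a == bu F i) && (b == bu F' i))
                                     || ((a == bv F i) && (b == bv F' i))]
                      | _, _ => false end)
          (bE H) h,
        (forall i, bu H i = h (inl (bu F i))) &
        (forall i, bv H i = h (inl (bv F i)))].

Definition bw k (F : bgraph k) (j : 'I_(k + k)) : bV F :=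
  match split j with inl a => bu F a | inr b => bv F b end.

Definition bperm k (F : bgraph k) (s : {perm 'I_(k + k)}) : bgraph k :=
  @BGraph k (bV F) (bE F) (bE_sym F)
    (fun i => bw F (s (lshift k i))) (fun i => bw F (s (@rshift k k i))).

(* position of a (0-based) index in the sequence (0,...,k-1,2k-1,...,k);
   this map is an involution of [0,2k) *)
Definition cycpos (k t : nat) : nat := if t < k then t else (k + k).-1 - (t - k).

(* C_k : the rotations of the sequence (1,...,k,2k,...,k+1) *)
Definition in_Ck k (s : {perm 'I_(k + k)}) : Prop :=
  exists j : nat, forall i : 'I_(k + k),
    val (s i) = cycpos k ((cycpos k i + j) %% (k + k)).

Definition QkP k (Q : bgraph k) : Prop := bminor (Ck k) Q.
Definition QkS k (Q : bgraph k) : Prop := bminor (Mk k) Q.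

Inductive Pk k : bgraph k -> Prop :=
  | Pk_Q F : QkP F \/ QkS F -> Pk F
  | Pk_series F F' H : Pk F -> Pk F' -> series_comp F F' H -> Pk H
  | Pk_parallel F Q H : Pk F -> QkP Q -> parallel_comp F Q H -> Pk H
  | Pk_perm F s : Pk F -> in_Ck s -> Pk (bperm F s).

From mathcomp Require Import all_boot all_fingroup.
Set Implicit Arguments. Unset Strict Implicit. Unset Printing Implicit Defensive.

(* Induct over P_k, keeping a tree decomposition with bags of size at most 3k
   one of whose bags contains every labelled vertex.  Graphs in Q_k have only
   labelled vertices, so a single bag of size at most 2k does.  For a series or
   parallel composition, hang the decompositions of both factors from a new node
   whose bag is the set of labelled vertices of both factors.  The composition
   identifies only vertices of that bag, so the images of the bags still form a
   tree decomposition.  After the identification the new bag consists of the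
   in-labels of F, the out-labels of F (which are the in-labels of F') and the
   out-labels of F' in a series composition, and of the labels of F alone in a
   parallel one: at most 3k vertices.  Relabelling by a permutation does not
   create new labelled vertices. *)

Section Connect.
Variable T : finType.

Lemma homo_connect (U : finType) (r : rel T) (r' : rel U) (f : T -> U) :
  {homo f : a b / r a b >-> r' a b} ->
  {homo f : a b / connect r a b >-> connect r' a b}.
Proof.
move=> fr a b /connectP [p + ->]; elim: p a => [|c p IH] a /=; first by rewrite connect0.
by case/andP=> /fr rac /IH; apply: connect_trans (connect1 rac).
Qed.

Lemma connect_invariant (r : rel T) (g : T -> bool) :
  (forall a b, r a b -> g a = g b) -> forall a b, connect r a b -> g a = g b.
Proof.
move=> gr a b /connectP [p + ->]; elim: p a => [|c p IH] a //=.
by case/andP=> /gr -> /IH.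
Qed.

Lemma connect_neq_step (r : rel T) x y : connect r x y -> x != y -> exists z, r x z.
Proof.
case/connectP => [[|z p]] /=; first by move=> _ ->; rewrite eqxx.
by case/andP=> rxz _ _ _; exists z.
Qed.

End Connect.

Section Bridges.
Variables (T : finType) (e : rel T).

Lemma same_pairC (x y a b : T) : same_pair x y b a = same_pair x y a b.
Proof. by rewrite /same_pair orbC andbC [(a == y) && _]andbC. Qed.

Lemma same_pair_inj (U : eqType) (f : U -> T) x y a b :
  injective f -> same_pair (f x) (f y) (f a) (f b) = same_pair x y a b.
Proof. by move=> fi; rewrite /same_pair !(inj_eq fi). Qed.

Definition splits (x y : T) (g : T -> bool) : Prop :=
  g x != g y /\ forall a b, e a b -> ~~ same_pair x y a b -> g a = g b.

Lemma splitsC x y g : splits x y g -> splits y x g.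
Proof.
by case=> gxy gab; split=> [|a b eab]; rewrite 1?eq_sym // /same_pair orbC; apply: gab.
Qed.

Lemma splits_bridge x y :
  (exists g, splits x y g) ->
  ~~ connect (fun a b => e a b && ~~ same_pair x y a b) x y.
Proof.
case=> g [gxy gab]; apply: contra gxy => /(connect_invariant _) -> //.
by move=> a b /andP [eab nab]; apply: gab.
Qed.

Lemma tree_edge_splits x y : is_tree e -> e x y -> exists g, splits x y g.
Proof.
case=> _ se _ _ bridge exy.
set e' := fun a b => e a b && ~~ same_pair x y a b.
have e'C : connect_sym e'.
  by apply: sym_connect_sym => a b; rewrite /e' se same_pairC.
exists (connect e' x); split=> [|a b eab nab]; first by rewrite connect0; apply: bridge.
rewrite (e'C x a) (e'C x b); apply: same_connect => //.
by apply: connect1; rewrite /e' eab.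
Qed.

End Bridges.

Section TreeJoin.
Variables (T1 T2 : finType) (e1 : rel T1) (e2 : rel T2) (t1 : T1) (t2 : T2).

Definition join_rel : rel (option (T1 + T2)) := fun x y =>
  match x, y with
  | Some (inl a), Some (inl b) => e1 a b
  | Some (inr a), Some (inr b) => e2 a b
  | None, Some (inl a) | Some (inl a), None => a == t1
  | None, Some (inr a) | Some (inr a), None => a == t2
  | _, _ => false
  end.

Hypotheses (tree1 : is_tree e1) (tree2 : is_tree e2).

Lemma join_rel_sym : symmetric join_rel.
Proof.
case: tree1 => _ sym1 _ _ _; case: tree2 => _ sym2 _ _ _.
by move=> [[a|a]|] [[b|b]|] //=; rewrite ?sym1 ?sym2.
Qed.

Lemma connect_join_None x : connect join_rel x None.
Proof.
case: tree1 => _ _ _ conn1 _; case: tree2 => _ _ _ conn2 _.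
case: x => [[a|a]|]; rewrite ?connect0 //.
- apply: connect_trans (connect1 (_ : join_rel (Some (inl t1)) None)) => /=; last exact: eqxx.
  exact: (homo_connect (f := fun a => Some (inl a))) (conn1 a t1).
- apply: connect_trans (connect1 (_ : join_rel (Some (inr t2)) None)) => /=; last exact: eqxx.
  exact: (homo_connect (f := fun a => Some (inr a))) (conn2 a t2).
Qed.

Let inl_inj : injective (fun a => Some (@inl T1 T2 a)).
Proof. by move=> a b [->]. Qed.
Let inr_inj : injective (fun a => Some (@inr T1 T2 a)).
Proof. by move=> a b [->]. Qed.

Lemma splits_join_l x y : (exists g, splits e1 x y g) ->
  exists g, splits join_rel (Some (inl x)) (Some (inl y)) g.
Proof.
case=> g [gxy gab]; exists (fun z => if z is Some (inl a) then g a else g t1).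
split=> // [[[a|a]|] [[b|b]|]] //= eab; try by rewrite (eqP eab).
by rewrite (same_pair_inj _ _ _ _ inl_inj); apply: gab.
Qed.

Lemma splits_join_r x y : (exists g, splits e2 x y g) ->
  exists g, splits join_rel (Some (inr x)) (Some (inr y)) g.
Proof.
case=> g [gxy gab]; exists (fun z => if z is Some (inr a) then g a else g t2).
split=> // [[[a|a]|] [[b|b]|]] //= eab; try by rewrite (eqP eab).
by rewrite (same_pair_inj _ _ _ _ inr_inj); apply: gab.
Qed.

Lemma splits_join_hub_l : exists g, splits join_rel (Some (inl t1)) None g.
Proof.
exists (fun z => if z is Some (inl _) then true else false).
by split=> // [[[a|a]|] [[b|b]|]] //= /eqP ->; rewrite /same_pair !eqxx ?orbT.
Qed.

Lemma splits_join_hub_r : exists g, splits join_rel (Some (inr t2)) None g.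
Proof.
exists (fun z => if z is Some (inr _) then true else false).
by split=> // [[[a|a]|] [[b|b]|]] //= /eqP ->; rewrite /same_pair !eqxx ?orbT.
Qed.

Lemma join_rel_tree : is_tree join_rel.
Proof.
have [_ _ irr1 _ _] := tree1; have [_ _ irr2 _ _] := tree2.
split.
- by rewrite card_option.
- exact: join_rel_sym.
- by move=> [[a|a]|] /=; rewrite ?irr1 ?irr2.
- move=> x y; apply: connect_trans (connect_join_None x) _.
  by rewrite (sym_connect_sym join_rel_sym); apply: connect_join_None.
move=> [[a|a]|] [[b|b]|] //= eab; apply: splits_bridge; try rewrite (eqP eab).
- exact/splits_join_l/(tree_edge_splits tree1 eab).
- exact: splits_join_hub_l.
- exact/splits_join_r/(tree_edge_splits tree2 eab).
- exact: splits_join_hub_r.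
- by have [g /splitsC] := splits_join_hub_l; exists g.
- by have [g /splitsC] := splits_join_hub_r; exists g.
Qed.

End TreeJoin.

Section SumImset.
Variables V1 V2 : finType.

Lemma mem_inl_imset (S : {set V1}) a : (@inl V1 V2 a \in inl @: S) = (a \in S).
Proof. by apply: mem_imset => x y []. Qed.
Lemma mem_inr_imset (S : {set V2}) a : (@inr V1 V2 a \in inr @: S) = (a \in S).
Proof. by apply: mem_imset => x y []. Qed.
Lemma mem_inr_inl_imset (S : {set V1}) a : (@inr V1 V2 a \in inl @: S) = false.
Proof. by apply/imsetP => [[x _]]. Qed.
Lemma mem_inl_inr_imset (S : {set V2}) a : (@inl V1 V2 a \in inr @: S) = false.
Proof. by apply/imsetP => [[x _]]. Qed.

End SumImset.

Section DecompositionJoin.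
Variables (V1 V2 T1 T2 : finType) (E1 : rel V1) (E2 : rel V2).
Variables (e1 : rel T1) (e2 : rel T2) (B1 : T1 -> {set V1}) (B2 : T2 -> {set V2}).
Variables (t1 : T1) (t2 : T2) (X1 : {set V1}) (X2 : {set V2}).

Definition sumrel : rel (V1 + V2) := fun s t =>
  match s, t with
  | inl a, inl b => E1 a b
  | inr a, inr b => E2 a b
  | _, _ => false
  end.

Definition join_bag (t : option (T1 + T2)) : {set V1 + V2} :=
  match t with
  | None => inl @: X1 :|: inr @: X2
  | Some (inl s) => inl @: B1 s
  | Some (inr s) => inr @: B2 s
  end.

Let mem_join_bag :=
  (mem_inl_imset, mem_inr_imset, mem_inr_inl_imset, mem_inl_inr_imset, in_setU, orbF).

Hypotheses (td1 : tree_decomposition E1 e1 B1) (td2 : tree_decomposition E2 e2 B2).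
Hypotheses (sX1 : X1 \subset B1 t1) (sX2 : X2 \subset B2 t2).

Lemma join_decomposition : tree_decomposition sumrel (join_rel e1 e2 t1 t2) join_bag.
Proof.
case: td1 => tree1 cover1 edge1 conn1; case: td2 => tree2 cover2 edge2 conn2.
split; first exact: join_rel_tree.
- move=> [a|a].
    by have [t at_] := cover1 a; exists (Some (inl t)); rewrite /= mem_join_bag.
  by have [t at_] := cover2 a; exists (Some (inr t)); rewrite /= mem_join_bag.
- move=> [a|a] [b|b] //= eab.
    by have [t abt] := edge1 a b eab; exists (Some (inl t)); rewrite /= !mem_join_bag.
  by have [t abt] := edge2 a b eab; exists (Some (inr t)); rewrite /= !mem_join_bag.
move=> x.
set R := fun a b => [&& join_rel e1 e2 t1 t2 a b, x \in join_bag a & x \in join_bag b].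
have RC : connect_sym R.
  apply: sym_connect_sym => a b; rewrite /R (join_rel_sym _ _ tree1 tree2).
  by rewrite [(x \in join_bag b) && _]andbC.
case: x @R RC => [a|a] R RC.
- have side s s' : a \in B1 s -> a \in B1 s' -> connect R (Some (inl s)) (Some (inl s')).
    move=> aBs aBs'; apply: (homo_connect (f := fun t => Some (inl t))) (conn1 a s s' aBs aBs').
    move=> u v /and3P [euv au av].
    by rewrite /R /= !mem_join_bag euv au av.
  have hub s : a \in B1 s -> a \in X1 -> connect R (Some (inl s)) None.
    move=> aBs aX; have at1 : a \in B1 t1 by apply: (subsetP sX1).
    apply: connect_trans (side _ _ aBs at1) (connect1 _).
    by rewrite /R /= !mem_join_bag eqxx at1.
  move=> [[s|s]|] [[s'|s']|] //=; rewrite ?mem_join_bag ?connect0 // => aBs aBs'.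
  - exact: side.
  - exact: hub.
  - by rewrite RC; apply: hub.
- have side s s' : a \in B2 s -> a \in B2 s' -> connect R (Some (inr s)) (Some (inr s')).
    move=> aBs aBs'; apply: (homo_connect (f := fun t => Some (inr t))) (conn2 a s s' aBs aBs').
    move=> u v /and3P [euv au av].
    by rewrite /R /= !mem_join_bag euv au av.
  have hub s : a \in B2 s -> a \in X2 -> connect R (Some (inr s)) None.
    move=> aBs aX; have at2 : a \in B2 t2 by apply: (subsetP sX2).
    apply: connect_trans (side _ _ aBs at2) (connect1 _).
    by rewrite /R /= !mem_join_bag eqxx at2.
  move=> [[s|s]|] [[s'|s']|] //=; rewrite ?mem_join_bag ?connect0 // => aBs aBs'.
  - exact: side.
  - exact: hub.
  - by rewrite RC; apply: hub.
Qed.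

End DecompositionJoin.

Lemma image_decomposition (V W T : finType) (E : rel V) (EW : rel W) (e : rel T)
    (B : T -> {set V}) (h : V -> W) (t0 : T) :
  tree_decomposition E e B -> (forall p, exists x, h x = p) ->
  (forall p q, EW p q -> exists x y, [/\ h x = p, h y = q & E x y]) ->
  (forall x y, h x = h y -> x != y -> x \in B t0) ->
  tree_decomposition EW e (fun t => h @: B t).
Proof.
case=> tree cover edge conn h_onto EW_lift h_id; split=> //.
- move=> w; have [x <-] := h_onto w; have [t xt] := cover x.
  by exists t; apply: imset_f.
- move=> w w' /EW_lift [x [y [<- <- exy]]]; have [t /andP [xt yt]] := edge x y exy.
  by exists t; rewrite !imset_f.
move=> w s s' /imsetP [a aBs ->] /imsetP [a' aBs' haa'].
have lift b : subrel (fun u v => [&& e u v, b \in B u & b \in B v])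
    (connect (fun u v => [&& e u v, h b \in h @: B u & h b \in h @: B v])).
  by move=> u v /and3P [euv bu bv]; apply: connect1; rewrite euv !imset_f.
case: (eqVneq a a') aBs' => [<- aBs'|aa' aBs'].
  exact: connect_sub (lift a) _ _ (conn a s s' aBs aBs').
have at0 : a \in B t0 by apply: h_id aa'.
have a't0 : a' \in B t0 by apply: (h_id a' a); rewrite 1?eq_sym.
apply: (@connect_trans _ _ t0).
  exact: connect_sub (lift a) _ _ (conn a s t0 aBs at0).
by rewrite haa'; apply: connect_sub (lift a') _ _ (conn a' t0 s' a't0 aBs').
Qed.

Lemma card_imset_ord k (T : finType) (f : 'I_k -> T) : #|[set f i | i : 'I_k]| <= k.
Proof. by rewrite (leq_trans (leq_imset_card _ _)) ?card_ord. Qed.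

Lemma card_setU_le (T : finType) (A B : {set T}) : #|A :|: B| <= #|A| + #|B|.
Proof. by rewrite cardsU leq_subr. Qed.

Section Labels.
Variable k : nat.

Definition labels (F : bgraph k) : {set bV F} :=
  [set bu F i | i : 'I_k] :|: [set bv F i | i : 'I_k].

Lemma labels_u (F : bgraph k) i : bu F i \in labels F.
Proof. by rewrite in_setU imset_f. Qed.

Lemma labels_v (F : bgraph k) i : bv F i \in labels F.
Proof. by rewrite in_setU orbC imset_f. Qed.

Lemma labelsP (F : bgraph k) x :
  reflect (exists i, x = bu F i \/ x = bv F i) (x \in labels F).
Proof.
apply: (iffP idP) => [|[i [->|->]]]; rewrite ?labels_u ?labels_v //.
by rewrite in_setU => /orP [] /imsetP [i _ ->]; exists i; [left|right].
Qed.

Lemma card_labels (F : bgraph k) : #|labels F| <= k + k.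
Proof. by rewrite (leq_trans (card_setU_le _ _)) // leq_add ?card_imset_ord. Qed.

Lemma labels_perm (F : bgraph k) s : labels (bperm F s) \subset labels F.
Proof.
apply/subsetP => x /labelsP [i [->|->]] /=; rewrite /bw;
  by case: split => j; rewrite ?labels_u ?labels_v.
Qed.

Definition all_labelled (F : bgraph k) : Prop := forall x : bV F, x \in labels F.

Lemma bminor_all_labelled (G H : bgraph k) :
  bminor G H -> all_labelled G -> all_labelled H.
Proof.
move=> GH lG; elim: GH => {H} [H | H H' _ lH | H H' _ lH | H H' _ lH].
- case=> h [[g _ gK] _ hu hv] z; rewrite -(gK z).
  by case/labelsP: (lG (g z)) => i [->|->]; rewrite ?hu ?hv ?labels_u ?labels_v.
- case=> x [y [_ [h [[g _ gK] _ hu hv]]]] z; rewrite -(gK z).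
  by case/labelsP: (lH (g z)) => i [->|->]; rewrite ?hu ?hv ?labels_u ?labels_v.
- case=> x [_ [h [h_inj _ _ _ [hu hv]]]] z.
  case/labelsP: (lH (h z)) => i [zi|zi].
    by rewrite -hu in zi; rewrite (h_inj _ _ zi) labels_u.
  by rewrite -hv in zi; rewrite (h_inj _ _ zi) labels_v.
- case=> x [y [_ [_ [h [h_onto _ _ hu hv]]]]] z; have [a <-] := h_onto z.
  by case/labelsP: (lH a) => i [->|->]; rewrite ?hu ?hv ?labels_u ?labels_v.
Qed.

Lemma all_labelled_ord (E : rel 'I_(k + k)) (Es : symmetric E) :
  all_labelled (@BGraph k _ E Es (lshift k) (@rshift k k)).
Proof. by move=> x; rewrite -[x]splitK; case: split => j; rewrite ?labels_u ?labels_v. Qed.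

Lemma Qk_all_labelled (Q : bgraph k) : QkP Q \/ QkS Q -> all_labelled Q.
Proof. by case=> /bminor_all_labelled; apply; apply: all_labelled_ord. Qed.

End Labels.

Lemma glue_eq (T W : finType) (E ident : rel T) (EW : rel W) h x y :
  glue E ident EW h -> ident x y -> h x = h y.
Proof. by case=> _ h_eq _ ixy; apply/eqP; rewrite h_eq connect1 // /symr ixy. Qed.

Section RootedDecompositions.
Variable k : nat.

Lemma card_labels_triple (F : bgraph k) : #|labels F| <= 3 * k.
Proof. by rewrite (leq_trans (card_labels F)) // !mulSnr mul0n add0n leq_addr. Qed.

Definition label_rooted_td (F : bgraph k) : Prop :=
  exists (T : finType) (e : rel T) (B : T -> {set bV F}) (t0 : T),
    [/\ tree_decomposition (bE F) e B, forall t, #|B t| <= 3 * k & labels F \subset B t0].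

Lemma all_labelled_rooted_td (F : bgraph k) : all_labelled F -> label_rooted_td F.
Proof.
move=> lF; exists unit, (fun _ _ => false), (fun _ => setT), tt; split.
- split; last by move=> x [] [].
  + by split=> // [|[] []]; rewrite ?card_unit ?connect0.
  + by move=> x; exists tt; rewrite in_setT.
  + by move=> x y _; exists tt; rewrite !in_setT.
- move=> _; have -> : [set: bV F] = labels F by apply/setP => x; rewrite in_setT lF.
  exact: card_labels_triple.
- exact: subsetT.
Qed.

Lemma label_rooted_td_perm (F : bgraph k) s :
  label_rooted_td F -> label_rooted_td (bperm F s).
Proof.
case=> T [e [B [t0 [td size_B root]]]]; exists T, e, B, t0; split=> //.
exact: subset_trans (labels_perm F s) root.
Qed.

Definition glue_hub (F F' : bgraph k) : {set bV F + bV F'} :=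
  inl @: labels F :|: inr @: labels F'.

Lemma inl_glue_hub (F F' : bgraph k) a : (inl a \in glue_hub F F') = (a \in labels F).
Proof. by rewrite in_setU mem_inl_imset mem_inl_inr_imset orbF. Qed.

Lemma inr_glue_hub (F F' : bgraph k) a : (inr a \in glue_hub F F') = (a \in labels F').
Proof. by rewrite in_setU mem_inr_imset mem_inr_inl_imset. Qed.

Lemma label_rooted_td_glue (F F' H : bgraph k) ident h :
  label_rooted_td F -> label_rooted_td F' -> glue (sumE F F') ident (bE H) h ->
  (forall s t, ident s t -> (s \in glue_hub F F') && (t \in glue_hub F F')) ->
  #|h @: glue_hub F F'| <= 3 * k -> labels H \subset h @: glue_hub F F' ->
  label_rooted_td H.
Proof.
move=> [T1 [e1 [B1 [t1 [td1 size1 root1]]]]] [T2 [e2 [B2 [t2 [td2 size2 root2]]]]].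
move=> [h_onto h_eq h_edge] ident_hub size_hub labels_H.
exists _, (join_rel e1 e2 t1 t2), (fun t => h @: join_bag B1 B2 (labels F) (labels F') t).
(* the bag of the new node [None] is [h @: glue_hub F F'] *)
exists None.
split=> //.
- apply: (image_decomposition (t0 := None)) (join_decomposition td1 td2 root1 root2)
    h_onto (fun p q pq => (h_edge p q).1 pq) _.
  move=> x y /eqP; rewrite h_eq => /connect_neq_step xy /xy [z].
  by case/orP=> /ident_hub /andP [].
- move=> [[s|s]|] //=; rewrite (leq_trans (leq_imset_card _ _)) //.
    by rewrite (leq_trans (leq_imset_card _ _)).
  by rewrite (leq_trans (leq_imset_card _ _)).
Qed.

Lemma label_rooted_td_series (F F' H : bgraph k) :
  label_rooted_td F -> label_rooted_td F' -> series_comp F F' H -> label_rooted_td H.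
Proof.
move=> tdF tdF' [h [gl hu hv]].
have glued i : h (inr (bu F' i)) = h (inl (bv F i)).
  by symmetry; apply: (glue_eq gl); apply/existsP; exists i; rewrite !eqxx.
apply: label_rooted_td_glue tdF tdF' gl _ _ _.
- move=> [a|a] [b|b] //= /existsP [i /andP [/eqP -> /eqP ->]].
  by rewrite inl_glue_hub inr_glue_hub labels_u labels_v.
- pose S := [set h (inl a) | a in labels F] :|: [set h (inr (bv F' i)) | i : 'I_k].
  apply: (@leq_trans #|S|).
    apply/subset_leq_card/subsetP => w /imsetP [[a|a] + ->].
      by rewrite inl_glue_hub => aF; rewrite in_setU imset_f.
    rewrite inr_glue_hub => /labelsP [i [->|->]]; rewrite in_setU ?glued imset_f ?orbT //.
    exact: labels_v.
  rewrite !mulSnr mul0n add0n (leq_trans (card_setU_le _ _)) // leq_add ?card_imset_ord //.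
  exact: leq_trans (leq_imset_card _ _) (card_labels F).
apply/subsetP => w /labelsP [i [->|->]]; rewrite ?hu ?hv; apply: imset_f.
  by rewrite inl_glue_hub labels_u.
by rewrite inr_glue_hub labels_v.
Qed.

Lemma label_rooted_td_parallel (F Q H : bgraph k) :
  label_rooted_td F -> QkP Q -> parallel_comp F Q H -> label_rooted_td H.
Proof.
move=> tdF QQ [h [gl hu hv]].
have tdQ := all_labelled_rooted_td (Qk_all_labelled (or_introl QQ)).
have glued_u i : h (inr (bu Q i)) = h (inl (bu F i)).
  by symmetry; apply: (glue_eq gl); apply/existsP; exists i; rewrite !eqxx.
have glued_v i : h (inr (bv Q i)) = h (inl (bv F i)).
  by symmetry; apply: (glue_eq gl); apply/existsP; exists i; rewrite !eqxx orbT.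
apply: label_rooted_td_glue tdF tdQ gl _ _ _.
- move=> [a|a] [b|b] //= /existsP [i /orP [] /andP [/eqP -> /eqP ->]];
    by rewrite inl_glue_hub inr_glue_hub ?labels_u ?labels_v.
- apply: (@leq_trans #|[set h (inl a) | a in labels F]|); last first.
    exact: leq_trans (leq_imset_card _ _) (card_labels_triple F).
  apply/subset_leq_card/subsetP => w /imsetP [[a|a] + ->].
    by rewrite inl_glue_hub => aF; rewrite imset_f.
  rewrite inr_glue_hub => /labelsP [i [->|->]];
    by rewrite ?glued_u ?glued_v imset_f ?labels_u ?labels_v.
apply/subsetP => w /labelsP [i [->|->]]; rewrite ?hu ?hv; apply: imset_f;
  by rewrite inl_glue_hub ?labels_u ?labels_v.
Qed.

Lemma Pk_label_rooted_td (F : bgraph k) : Pk F -> label_rooted_td F.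
Proof.
elim=> {F} [F /Qk_all_labelled /all_labelled_rooted_td //
           | F F' H _ tdF _ tdF' | F Q H _ tdF QQ | F s _ tdF _].
- exact: label_rooted_td_series.
- exact: label_rooted_td_parallel.
- exact: label_rooted_td_perm.
Qed.

End RootedDecompositions.

Theorem lemma4p5 (k : nat) (F : bgraph k) :
  1 <= k -> Pk F -> treewidth_le (bE F) (3 * k - 1).
Proof.
move=> k_gt0 /Pk_label_rooted_td [T [e [B [_ [td size_B _]]]]].
exists T, e, B; split=> // t.
by rewrite subn1 prednK ?muln_gt0.
Qed.
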